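(* Let $\underline\Omega=\{L\in\mathbb R^{m_2\times d}: Q-L^\top R^vL\succ0\}$. In general the problem is nonconvex-nonconcave: there exist problem data and $L\in\underline\Omega$ such that $\min_K\mathcal C(K,L)$ is a nonconvex minimization problem (the set of $K$ for which $(K,L)$ is stabilizing, equivalently $\mathcal C(K,L)<\infty$, is nonconvex), and there exist problem data and $K$ such that $\max_{L\in\underline\Omega}\mathcal C(K,L)$ is a nonconcave maximization problem (the set of $L\in\underline\Omega$ for which $(K,L)$ is stabilizing is nonconvex).
   Context: Zero-sum LQ game: $A\in\mathbb R^{d\times d}$, $B\in\mathbb R^{d\times m_1}$, $C\in\mathbb R^{d\times m_2}$, symmetric positive definite $Q,R^u,R^v$; dynamics $x_{t+1}=Ax_t+Bu_t+Cv_t$, cost $x_t^\top Qx_t+u_t^\top R^uu_t-v_t^\top R^vv_t$, initial state $x_0\sim\mathcal D$ with $\Sigma_0=\mathbb E[x_0x_0^\top]\succ0$. Linear feedback policies $u_t=-Kx_t$, $v_t=-Lx_t$ with $K\in\mathbb R^{m_1\times d}$, $L\in\mathbb R^{m_2\times d}$; $(K,L)$ is stabilizing if $\rho(A-BK-CL)<1$. For such policies $\mathcal C(K,L)=\mathbb E_{x_0\sim\mathcal D}\sum_{t\ge0}[x_t^\top Qx_t+(Kx_t)^\top R^u(Kx_t)-(Lx_t)^\top R^v(Lx_t)]$ (possibly infinite). *)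

(* Real matrices are represented as matrices over algC
   (algebraic complex numbers, a numClosedFieldType) all of whose entries are
   real; eigenvalues are taken in algC, so the spectral radius is available. *)
From HB Require Import structures.
From mathcomp Require Import all_boot all_order all_algebra all_field all_character.
Set Implicit Arguments. Unset Strict Implicit. Unset Printing Implicit Defensive.
Import Order.TTheory GRing.Theory Num.Theory.
Local Open Scope ring_scope.

Definition spec_rad_lt1 (n : nat) (M : 'M[algC]_n) : Prop :=
  forall a : algC, eigenvalue M a -> `|a| < 1.

Definition posdef (n : nat) (Q : 'M[algC]_n) : Prop :=
  [/\ Q \is a realmx, Q^T = Q &
      forall v : 'cV[algC]_n, v \is a realmx -> v != 0 -> 0 < (v^T *m Q *m v) 0 0].

Definition stabilizing (d m1 m2 : nat) (A : 'M[algC]_d) (B : 'M[algC]_(d, m1))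
  (C : 'M[algC]_(d, m2)) (K : 'M[algC]_(m1, d)) (L : 'M[algC]_(m2, d)) : Prop :=
  spec_rad_lt1 (A - B *m K - C *m L).

Definition OmegaL (d m2 : nat) (Q : 'M[algC]_d) (Rv : 'M[algC]_m2)
  (L : 'M[algC]_(m2, d)) : Prop :=
  L \is a realmx /\ posdef (Q - L^T *m Rv *m L).

Definition real_convex (m n : nat) (S : 'M[algC]_(m, n) -> Prop) : Prop :=
  forall X Y, S X -> S Y -> forall t : algC, t \is Num.real -> 0 <= t <= 1 ->
    S ((1 - t) *: X + t *: Y).

Definition lq_data (d m1 m2 : nat) (A : 'M[algC]_d) (B : 'M[algC]_(d, m1))
  (C : 'M[algC]_(d, m2)) (Q : 'M[algC]_d) (Ru : 'M[algC]_m1) (Rv : 'M[algC]_m2)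
  : Prop :=
  [/\ A \is a realmx, B \is a realmx, C \is a realmx & [/\ posdef Q, posdef Ru & posdef Rv]].

(* Both counterexamples live in the plane with A = 0 and a single active
   player whose gain G gives the closed loop -G.  The two nilpotent shifts
   2 E_01 and 2 E_10 square to zero, so they are stabilizing, while their
   midpoint is the coordinate swap E_01 + E_10, which fixes the all-ones
   vector and hence has spectral radius 1.  Thus any set of gains containing
   both shifts and consisting of stabilizing gains is nonconvex. *)

From HB Require Import structures.
From mathcomp Require Import all_boot all_order all_algebra all_field all_character.
From mathcomp Require Import ring.
Import Order.TTheory GRing.Theory Num.Theory.
Local Open Scope ring_scope.

Lemma diag_quad_form n (d : 'rV[algC]_n) (v : 'cV[algC]_n) :
  (v^T *m diag_mx d *m v) 0 0 = \sum_i d 0 i * v i 0 ^+ 2.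
Proof.
rewrite mul_mx_diag mxE; apply: eq_bigr => i _ /=.
by rewrite !mxE mulrAC -expr2 mulrC.
Qed.

Lemma posdef_diag n (d : 'rV[algC]_n) :
  (forall i, 0 < d 0 i) -> posdef (diag_mx d).
Proof.
move=> d_gt0; split.
- by apply/mxOverP => i j; rewrite mxE rpredMn ?gtr0_real.
- exact: tr_diag_mx.
- move=> v /mxOverP v_real v_neq0; rewrite diag_quad_form.
  have term_ge0 i : 0 <= d 0 i * v i 0 ^+ 2.
    by rewrite mulr_ge0 ?(ltW (d_gt0 i)) // -realEsqr v_real.
  have [k vk_neq0] : exists i, v i 0 != 0.
    apply/existsP; apply: contraNT v_neq0; rewrite negb_exists => /forallP v0.
    by apply/eqP/matrixP => i j; rewrite (ord1 j) mxE; apply/eqP/negPn/v0.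
  rewrite (bigD1 k) // ltr_pwDl ?sumr_ge0 // mulr_gt0 //.
  by rewrite lt_def sqrf_eq0 vk_neq0 -realEsqr v_real.
Qed.

Lemma eigenvalueN n (M : 'M[algC]_n) a : eigenvalue (- M) a = eigenvalue M (- a).
Proof.
have eigN (N : 'M[algC]_n) b : eigenvalue (- N) b -> eigenvalue N (- b).
  case/eigenvalueP=> v vN v_neq0; apply/eigenvalueP; exists v; last exact: v_neq0.
  by rewrite scaleNr -vN mulmxN opprK.
apply/idP/idP; first exact: eigN.
by move=> Ma; have := eigN (- M) (- a); rewrite !opprK; apply.
Qed.

Lemma spec_rad_lt1N n (M : 'M[algC]_n) : spec_rad_lt1 (- M) <-> spec_rad_lt1 M.
Proof.
split=> stable a Ma; rewrite -normrN; apply: (stable (- a)).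
  by rewrite eigenvalueN opprK.
by rewrite -eigenvalueN.
Qed.

(* A matrix with N^2 = 0 has only the eigenvalue 0, hence is stable. *)
Lemma sqr0_stable n (N : 'M[algC]_n) : N *m N = 0 -> spec_rad_lt1 N.
Proof.
move=> NN0 a /eigenvalueP [v vN v_neq0].
have : (a ^+ 2) *: v = 0.
  by rewrite expr2 -scalerA -vN scalemxAl -vN -mulmxA NN0 mulmx0.
move/eqP; rewrite scaler_eq0 (negbTE v_neq0) orbF expf_eq0 /= => /eqP ->.
by rewrite normr0 ltr01.
Qed.

Lemma eigen1_unstable n (M : 'M[algC]_n) : eigenvalue M 1 -> ~ spec_rad_lt1 M.
Proof. by move=> M1 /(_ 1 M1); rewrite normr1 ltxx. Qed.

Lemma stabilizing_A0 {d m1 m2 : nat} (B : 'M[algC]_(d, m1)) (C : 'M[algC]_(d, m2)) K L :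
  stabilizing 0 B C K L <-> spec_rad_lt1 (B *m K + C *m L).
Proof. by rewrite /stabilizing sub0r -opprD; exact: spec_rad_lt1N. Qed.

Lemma midpoint_not_convex m n (S : 'M[algC]_(m, n) -> Prop) X Y :
  S X -> S Y -> ~ S (2^-1 *: (X + Y)) -> ~ real_convex S.
Proof.
move=> SX SY S_mid convS; apply: S_mid.
have half_real : (2^-1 : algC) \is Num.real by rewrite rpredV realn.
have half_bounds : 0 <= (2^-1 : algC) <= 1.
  by rewrite invr_ge0 ler0n invf_le1 ?ler1n ?ltr0n.
have -> : 2^-1 *: (X + Y) = (1 - 2^-1) *: X + 2^-1 *: Y.
  by rewrite [u in u - _](splitr 1) mul1r addrK scalerDr.
exact: convS.
Qed.

Lemma posdef_scalar n (c : algC) : 0 < c -> posdef (c%:M : 'M_n).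
Proof.
by move=> c_gt0; rewrite -diag_const_mx; apply: posdef_diag => i; rewrite mxE.
Qed.

Lemma posdef_flat (Q : 'M[algC]_0) : posdef Q.
Proof. by rewrite [Q]flatmx0 -[0](flatmx0 (diag_mx 0)); apply: posdef_diag => -[]. Qed.

Lemma scaled_delta_real m n (c : algC) (i : 'I_m) (j : 'I_n) :
  c \is Num.real -> c *: delta_mx i j \is a realmx.
Proof. by move=> c_real; apply/mxOverP => k l; rewrite !mxE rpredM ?realn. Qed.

Lemma scaled_delta_sqr0 n (c : algC) (i j : 'I_n) :
  i != j -> (c *: delta_mx i j) *m (c *: delta_mx i j) = 0.
Proof.
move=> /negbTE ji; rewrite -scalemxAl -scalemxAr mul_delta_mx_cond eq_sym ji.
by rewrite mulr0n !scaler0.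
Qed.

(* With Q = 5 I and R^v = I, every L = 2 E_ij lies in underline-Omega:
   Q - L^T L = 5 I - 4 E_jj is diagonal with entries 5 and 1. *)
Lemma OmegaL_scaled_delta n (i j : 'I_n) :
  OmegaL (5%:M) 1%:M ((2 : algC) *: delta_mx i j).
Proof.
split; first by rewrite scaled_delta_real ?realn.
have -> : 5%:M - (2 *: delta_mx i j)^T *m 1%:M *m (2 *: delta_mx i j) =
          diag_mx (\row_k (if k == j then 1 else 5 : algC)).
  rewrite mulmx1 [(_ *: _)^T]linearZ /= trmx_delta -scalemxAl -scalemxAr.
  rewrite mul_delta_mx scalerA.
  apply/matrixP => k l; rewrite !mxE.
  case: eqP => [<-|kl].
    by rewrite andbb !mulr1n; case: (k == j); rewrite /= ?mulr1 ?mulr0 ?subr0; ring.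
  have -> : (k == j) && (l == j) = false.
    by apply/negbTE/andP => -[/eqP kj /eqP lj]; apply: kl; rewrite kj lj.
  by rewrite !mulr0n mulr0 subr0.
by apply: posdef_diag => k; rewrite mxE; case: ifP => _; rewrite ?ltr01 ?ltr0n.
Qed.

Definition shift01 : 'M[algC]_2 := 2 *: delta_mx 0 1.
Definition shift10 : 'M[algC]_2 := 2 *: delta_mx 1 0.
Definition swap2 : 'M[algC]_2 := delta_mx 0 1 + delta_mx 1 0.

Lemma shifts_midpoint : 2^-1 *: (shift01 + shift10) = swap2.
Proof. by rewrite -scalerDr scalerA mulVf ?pnatr_eq0 // scale1r. Qed.

Lemma shifts_stable : spec_rad_lt1 shift01 /\ spec_rad_lt1 shift10.
Proof. by split; apply: sqr0_stable; apply: scaled_delta_sqr0. Qed.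

Lemma swap2_unstable : ~ spec_rad_lt1 swap2.
Proof.
apply: eigen1_unstable; apply/eigenvalueP; exists (const_mx 1).
  apply/matrixP => i j; rewrite scale1r !mxE !big_ord_recl big_ord0 !mxE /=.
  by case: j => [[|[|k]]] j_lt2 //=; rewrite !(mul1r, addr0, add0r).
by apply/eqP => /matrixP/(_ 0 0)/eqP; rewrite !mxE oner_eq0.
Qed.

Lemma shift_set_not_convex (S : 'M[algC]_2 -> Prop) :
  S shift01 -> S shift10 -> (S swap2 -> spec_rad_lt1 swap2) -> ~ real_convex S.
Proof.
move=> S01 S10 S_stable.
have S_mid : ~ S (2^-1 *: (shift01 + shift10)).
  by rewrite shifts_midpoint => /S_stable; exact: swap2_unstable.
exact: midpoint_not_convex S01 S10 S_mid.
Qed.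

Lemma shifts_real : shift01 \is a realmx /\ shift10 \is a realmx.
Proof. by split; apply: scaled_delta_real; rewrite realn. Qed.

Lemma realmx0 m n : (0 : 'M[algC]_(m, n)) \is a realmx.
Proof. by apply/mxOverP => i j; rewrite mxE real0. Qed.

Lemma realmx1 n : (1%:M : 'M[algC]_n) \is a realmx.
Proof. by apply/mxOverP => i j; rewrite mxE realn. Qed.

Lemma lq_data_controller :
  lq_data 0 1%:M (0 : 'M_(2, 0)) 1%:M 1%:M (0 : 'M[algC]_0).
Proof.
split; [exact: realmx0 | exact: realmx1 | exact: realmx0 |].
by split; [apply: posdef_scalar; exact: ltr01 | apply: posdef_scalar; exact: ltr01
          | exact: posdef_flat].
Qed.

Lemma lq_data_adversary :
  lq_data 0 (0 : 'M_(2, 0)) 1%:M 5%:M (0 : 'M[algC]_0) 1%:M.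
Proof.
split; [exact: realmx0 | exact: realmx0 | exact: realmx1 |].
by split; [apply: posdef_scalar; rewrite ltr0n | exact: posdef_flat
          | apply: posdef_scalar; exact: ltr01].
Qed.

Lemma controller_set_not_convex :
  ~ real_convex (fun K : 'M[algC]_2 =>
      K \is a realmx /\ stabilizing 0 1%:M (0 : 'M_(2, 0)) K (0 : 'M_(0, 2))).
Proof.
have stabE K : stabilizing 0 1%:M (0 : 'M_(2, 0)) K (0 : 'M_(0, 2)) <-> spec_rad_lt1 K.
  by have := stabilizing_A0 1%:M (0 : 'M_(2, 0)) K 0; rewrite mul1mx mul0mx addr0.
apply: shift_set_not_convex => [||[_ /stabE] //].
- by split; [case: shifts_real | apply/stabE; case: shifts_stable].
- by split; [case: shifts_real | apply/stabE; case: shifts_stable].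
Qed.

Lemma adversary_set_not_convex :
  ~ real_convex (fun L : 'M[algC]_2 =>
      OmegaL 5%:M 1%:M L /\ stabilizing 0 (0 : 'M_(2, 0)) 1%:M (0 : 'M_(0, 2)) L).
Proof.
have stabE L : stabilizing 0 (0 : 'M_(2, 0)) 1%:M (0 : 'M_(0, 2)) L <-> spec_rad_lt1 L.
  by have := stabilizing_A0 (0 : 'M_(2, 0)) 1%:M 0 L; rewrite mul1mx mul0mx add0r.
apply: shift_set_not_convex => [||[_ /stabE] //].
- by split; [exact: OmegaL_scaled_delta | apply/stabE; case: shifts_stable].
- by split; [exact: OmegaL_scaled_delta | apply/stabE; case: shifts_stable].
Qed.

Theorem lemma2 :
  (exists (d m1 m2 : nat) (A : 'M[algC]_d) (B : 'M[algC]_(d, m1))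
     (C : 'M[algC]_(d, m2)) (Q : 'M[algC]_d) (Ru : 'M[algC]_m1)
     (Rv : 'M[algC]_m2) (L : 'M[algC]_(m2, d)),
     lq_data A B C Q Ru Rv /\ OmegaL Q Rv L /\
     ~ real_convex (fun K : 'M[algC]_(m1, d) => K \is a realmx /\ stabilizing A B C K L))
  /\
  (exists (d m1 m2 : nat) (A : 'M[algC]_d) (B : 'M[algC]_(d, m1))
     (C : 'M[algC]_(d, m2)) (Q : 'M[algC]_d) (Ru : 'M[algC]_m1)
     (Rv : 'M[algC]_m2) (K : 'M[algC]_(m1, d)),
     lq_data A B C Q Ru Rv /\ K \is a realmx /\
     ~ real_convex (fun L : 'M[algC]_(m2, d) => OmegaL Q Rv L /\ stabilizing A B C K L)).
Proof.
split.
- exists 2%N, 2%N, 0%N, 0, 1%:M, 0, 1%:M, 1%:M, 0, 0.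
  split; first exact: lq_data_controller.
  split; last exact: controller_set_not_convex.
  split; first exact: realmx0.
  by rewrite mulmx0 subr0; apply: posdef_scalar; exact: ltr01.
- exists 2%N, 0%N, 2%N, 0, 0, 1%:M, 5%:M, 0, 1%:M, 0.
  split; first exact: lq_data_adversary.
  by split; [exact: realmx0 | exact: adversary_set_not_convex].
Qed.
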